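(* Let $u\neq0$ and $v$ be parameters and let $f(x,u)=\sum_{n\ge0}u^{\binom{n}{2}}a_nx^n$ be a formal power series. Define $f_{s,t}(x\oplus_{u,v}y)=\sum_{n\ge0}a_n(x\oplus_{u,v}y)^{(n)}_{s,t}=\sum_{n\ge0}a_n\sum_{k=0}^{n}\left\{{n\atop k}\right\}_{s,t}v^{\binom{k}{2}}u^{\binom{n-k}{2}}y^kx^{n-k}$. Then, as formal power series in $x,y$, $$f_{s,t}(x\oplus_{u,v}y)=\sum_{n\ge0}v^{\binom{n}{2}}\frac{y^n}{\{n\}_{s,t}!}\,(\mathrm{T}_{u^{-1}}\mathbf{D}_{s,t})^{n}f(x,u),$$ where the operators act on the variable $x$.
   Context: Let $s,t$ be nonzero reals with $s^2+4t\neq0$, $\varphi=\frac{s+\sqrt{s^2+4t}}{2}$, $\varphi'=\frac{s-\sqrt{s^2+4t}}{2}$, $\{n\}_{s,t}=\frac{\varphi^n-\varphi'^n}{\varphi-\varphi'}$, $\{n\}_{s,t}!=\{1\}_{s,t}\cdots\{n\}_{s,t}$ ($\{0\}_{s,t}!=1$), $\left\{{n\atop k}\right\}_{s,t}=\frac{\{n\}_{s,t}!}{\{k\}_{s,t}!\{n-k\}_{s,t}!}$, and $\binom{\beta}{2}=\beta(\beta-1)/2$. The $(s,t)$-derivative acts on power series by $\mathbf{D}_{s,t}x^m=\{m\}_{s,t}x^{m-1}$ (termwise), and $\mathrm{T}_a$ is the dilation $\mathrm{T}_af(x)=f(ax)$. The deformed binomial polynomial is $(x\oplus_{u,v}y)_{s,t}^{(n)}=\sum_{k=0}^n\left\{{n\atop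 k}\right\}_{s,t}u^{\binom{n-k}{2}}v^{\binom{k}{2}}x^{n-k}y^k$. *)

From HB Require Import structures.
From mathcomp Require Import all_boot all_order all_algebra.
From mathcomp Require Import complex.
Set Implicit Arguments. Unset Strict Implicit. Unset Printing Implicit Defensive.
Import Order.TTheory GRing.Theory Num.Theory.
Local Open Scope ring_scope.
Local Open Scope complex_scope.

Section Defs.
Variable R : rcfType.
Local Notation C := R[i].
Variables s t : R.

Definition disc : C := (s ^+ 2 + 4%:R * t)%:C.
Definition phi  : C := (s%:C + sqrtC disc) / 2%:R.
Definition phi' : C := (s%:C - sqrtC disc) / 2%:R.

Definition stnum (n : nat) : C := (phi ^+ n - phi' ^+ n) / (phi - phi').

Definition stfact (n : nat) : C := \prod_(1 <= k < n.+1) stnum k.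

Definition stbinom (n k : nat) : C :=
  stfact n / (stfact k * stfact (n - k)).

Definition b2 (b : nat) : nat := 'C(b, 2).

(* Formal power series in one variable x: coefficient sequences nat -> C.
   Formal power series in x,y: c i j = coefficient of x^i y^j. *)
Definition fps := nat -> C.
Definition fps2 := nat -> nat -> C.

(* (s,t)-derivative: D x^m = {m} x^(m-1), so coefficient of x^m in D g is
   {m+1} * (coefficient of x^(m+1) in g). *)
Definition Dst (g : fps) : fps := fun m => stnum m.+1 * g m.+1.

(* dilation T_a g(x) = g(a x) *)
Definition Tdil (a : C) (g : fps) : fps := fun m => a ^+ m * g m.

(* deformed binomial polynomial (x (+)_{u,v} y)^{(n)}_{s,t}, as a polynomial
   in x,y: coefficient of x^i y^j *)
Definition oplus_poly (u v : C) (n : nat) : fps2 := fun i j =>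
  if i + j == n then stbinom n j * u ^+ b2 i * v ^+ b2 j else 0.

Definition fxu (u : C) (a : nat -> C) : fps := fun n => u ^+ b2 n * a n.

(* f_{s,t}(x (+)_{u,v} y) = sum_n a_n (x (+)_{u,v} y)^{(n)}: the coefficient of
   x^i y^j only receives contributions from n <= i + j (polynomial of degree n) *)
Definition f_oplus (u v : C) (a : nat -> C) : fps2 := fun i j =>
  \sum_(n < (i + j).+1) a n * oplus_poly u v n i j.

Definition rhs_series (u v : C) (a : nat -> C) : fps2 := fun i j =>
  v ^+ b2 j / stfact j * iter j (fun g => Tdil u^-1 (Dst g)) (fxu u a) i.

End Defs.

From HB Require Import structures.
From mathcomp Require Import all_boot all_order all_algebra.
From mathcomp Require Import complex.
From mathcomp Require Import ring.
From Stdlib Require Import FunctionalExtensionality.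
Import Order.TTheory GRing.Theory Num.Theory.
Local Open Scope ring_scope.

(* Only the term n = i + j of f_oplus contributes to x^i y^j.  On the other
   side, each application of T_{u^-1} D shifts the coefficients of f(x,u) down
   by one, multiplying the coefficient of x^m by {m+1} u^-m; since
   b2 (m+1) = b2 m + m, after j steps the coefficient of x^i is
   u^(b2 i) {i+j}!/{i}! a_(i+j).  Both sides are therefore
   a_(i+j) u^(b2 i) v^(b2 j) {i+j}! / ({i}! {j}!). *)

Lemma b2S m : b2 m.+1 = (b2 m + m)%N.
Proof. by rewrite /b2 binS bin1. Qed.

Section STCalculus.
Variables (R : rcfType) (s t : R).

Lemma stfactS m : stfact s t m.+1 = stfact s t m * stnum s t m.+1.
Proof. by rewrite /stfact big_nat_recr. Qed.

Lemma stfact_neq0 :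
  (forall n, (0 < n)%N -> stnum s t n != 0) -> forall m, stfact s t m != 0.
Proof.
move=> stnum_neq0; elim=> [|m IHm]; first by rewrite /stfact big_geq ?oner_neq0.
by rewrite stfactS mulf_neq0 ?stnum_neq0.
Qed.

Lemma f_oplusE (u v : R[i]) (a : nat -> R[i]) i j :
  f_oplus s t u v a i j
  = a (i + j)%N * stfact s t (i + j) / (stfact s t j * stfact s t i)
    * u ^+ b2 i * v ^+ b2 j.
Proof.
rewrite /f_oplus big_ord_recr /= big1; last first.
  by move=> k _; rewrite /oplus_poly gtn_eqF // mulr0.
by rewrite add0r /oplus_poly eqxx /stbinom addnK !mulrA.
Qed.

Lemma stfact_mul_iter_TDst_fxu (u : R[i]) (a : nat -> R[i]) k m : u != 0 ->
  stfact s t m * iter k (fun g => Tdil u^-1 (Dst s t g)) (fxu u a) m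
  = u ^+ b2 m * stfact s t (m + k) * a (m + k)%N.
Proof.
move=> u_neq0; elim: k m => [|k IHk] m; first by rewrite addn0 /= /fxu mulrCA mulrA.
rewrite iterS {1}/Tdil {1}/Dst mulrCA [stfact _ _ m * _]mulrA -stfactS IHk.
rewrite addSnnS b2S exprD exprVn.
by field; rewrite expf_neq0.
Qed.

End STCalculus.

Theorem mainTheorem4 (R : rcfType) (s t : R)
  (hs : s != 0) (ht : t != 0) (hdisc : s ^+ 2 + 4%:R * t != 0)
  (hnum : forall n : nat, (0 < n)%N -> stnum s t n != 0)
  (u v : R[i]) (hu : u != 0) (a : nat -> R[i]) :
  f_oplus s t u v a = rhs_series s t u v a.
Proof.
have stfact_nz := @stfact_neq0 _ s t hnum.
apply: functional_extensionality => i; apply: functional_extensionality => j.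
rewrite f_oplusE /rhs_series.
rewrite (canRL (mulKf (stfact_nz i)) (@stfact_mul_iter_TDst_fxu _ s t u a j i hu)).
by field; rewrite !stfact_nz.
Qed.
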